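(* Let $X,Y$ be irreducible sofic shifts and let $f:X\to Y$ be a finite-to-one factor map which is right-continuing almost-everywhere with some retract $n\ge0$. Then $f$ is right-closing almost-everywhere.
   Context: Subshifts are closed shift-invariant subsets of $A^{\mathbb Z}$, $A$ finite, with shift $\sigma(x)_i=x_{i+1}$; a factor map is a continuous, shift-commuting, onto map; finite-to-one means every point has finitely many preimages. A point $x\in X$ is left-transitive in $X$ if $\{\sigma^i(x): i\le 0\}$ is dense in $X$. Points $x,y$ are left-asymptotic if there is $n$ with $x_i=y_i$ for all $i\le n$. A factor map $f:X\to Y$ is right-closing almost-everywhere if for all left-transitive $x,y\in X$ that are left-asymptotic, $f(x)=f(y)$ implies $x=y$. For an integer $n\ge0$, $f$ is right-continuing almost-everywhere with retract $n$ if for every $x\in X$ and every left-transitive $y\in Y$ with $f(x)_i=y_i$ for all $i\le n$, there exists $x'\in X$ with $x'_i=x_i$ for all $i\le 0$ and $f(x')=y$. *)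

From mathcomp Require Import all_boot.
From Stdlib Require Import ZArith List.

Set Implicit Arguments.
Unset Strict Implicit.
Unset Printing Implicit Defensive.

Definition config (A : Type) := Z -> A.

Definition shift (A : Type) (x : config A) : config A := fun i => x (i + 1)%Z.

Definition shiftk (A : Type) (k : Z) (x : config A) : config A := fun i => x (i + k)%Z.

Definition agree_on (A : Type) (m : Z) (x y : config A) : Prop :=
  forall i, (- m <= i <= m)%Z -> x i = y i.

Definition closed_set (A : Type) (X : config A -> Prop) : Prop :=
  forall x, (forall m, exists y, X y /\ agree_on m x y) -> X x.

Definition subshift (A : finType) (X : config A -> Prop) : Prop :=
  closed_set X /\ (forall x, X x -> X (shift x)) /\
  (forall x, X x -> exists y, X y /\ shift y = x).

(* Sofic shift (Lind–Marcus Def. 3.1.3): the set of label sequences of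
   bi-infinite paths in a finite labeled graph (V, E, src, tgt, lab). *)
Definition sofic (A : finType) (X : config A -> Prop) : Prop :=
  exists (V E : finType) (src tgt : E -> V) (lab : E -> A),
    forall x, X x <->
      exists p : Z -> E,
        (forall i, tgt (p i) = src (p (i + 1)%Z)) /\ (forall i, lab (p i) = x i).

(* Irreducible: for all words u, v of the language of X there is w with
   u w v in the language.  Words are windows u = x[a..b], v = y[c..d] of
   points of X; the point z carries u on [a,b], then a gap w of length g,
   then v. *)
Definition irreducible (A : finType) (X : config A -> Prop) : Prop :=
  forall x y, X x -> X y -> forall a b c d : Z,
    exists z g, X z /\ (0 <= g)%Z /\
      (forall i, (a <= i <= b)%Z -> z i = x i) /\
      (forall j, (c <= j <= d)%Z -> z (j - c + b + 1 + g)%Z = y j).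

Definition continuous_on (A B : finType) (X : config A -> Prop)
  (f : config A -> config B) : Prop :=
  forall x, X x -> forall m, exists k,
    forall x', X x' -> agree_on k x x' -> agree_on m (f x) (f x').

Definition factor_map (A B : finType) (X : config A -> Prop) (Y : config B -> Prop)
  (f : config A -> config B) : Prop :=
  (forall x, X x -> Y (f x)) /\
  continuous_on X f /\
  (forall x, X x -> f (shift x) = shift (f x)) /\
  (forall y, Y y -> exists x, X x /\ f x = y).

Definition finite_to_one (A B : finType) (X : config A -> Prop)
  (f : config A -> config B) : Prop :=
  forall y : config B, exists l : list (config A),
    forall x, X x -> f x = y -> In x l.

Definition left_transitive (A : finType) (X : config A -> Prop) (x : config A) : Prop :=
  forall y, X y -> forall m, exists i, (i <= 0)%Z /\ agree_on m (shiftk i x) y.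

Definition left_asymptotic (A : Type) (x y : config A) : Prop :=
  exists n : Z, forall i, (i <= n)%Z -> x i = y i.

Definition right_closing_ae (A B : finType) (X : config A -> Prop)
  (f : config A -> config B) : Prop :=
  forall x y, X x -> X y -> left_transitive X x -> left_transitive X y ->
    left_asymptotic x y -> f x = f y -> x = y.

Definition right_continuing_ae (A B : finType) (X : config A -> Prop)
  (Y : config B -> Prop) (f : config A -> config B) (n : nat) : Prop :=
  forall x y, X x -> Y y -> left_transitive Y y ->
    (forall i, (i <= Z.of_nat n)%Z -> f x i = y i) ->
    exists x', X x' /\ (forall i, (i <= 0)%Z -> x' i = x i) /\ f x' = y.

(* Let f : X -> Y be a finite-to-one factor map of sofic shifts which is
   right-continuing a.e. with retract n, and suppose x <> y are
   left-transitive, left-asymptotic (equal up to coordinate k) and f x = f y;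
   say x d <> y d with k < d.  Being sofic, X has a synchronizing window
   ("magic word"), and the left-transitive point x carries one at some
   [a, b] with b <= k.  Since x is left-transitive, a copy of y appears in x
   at an arbitrarily negative offset j; gluing x, at the copy of its
   synchronizing window, to the translate of x by j gives a point of X whose image
   agrees with f x up to j + d + n.  Right-continuation turns it into a
   preimage of f x which is left-asymptotic to x and differs from x at j + d.
   As j can be taken arbitrarily negative and f x has finitely many
   preimages, one preimage differs from x arbitrarily far left while being
   left-asymptotic to x, which is absurd. *)

From Pilot Require Import Defs.
From mathcomp Require Import all_boot boolp zify.
From Stdlib Require Import ZArith List Lia.

Set Implicit Arguments.
Unset Strict Implicit.
Local Open Scope Z_scope.

Definition agree_in (A : Type) (a b : Z) (x y : config A) : Prop :=
  forall i, a <= i <= b -> x i = y i.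

Definition splice (A : Type) (b : Z) (u v : config A) : config A :=
  fun i => if i <=? b then u i else v i.

Section ShiftAlgebra.
Variable A : Type.

Lemma shiftk_shiftk (a b : Z) (x : config A) : shiftk a (shiftk b x) = shiftk (a + b) x.
Proof. apply: funext => i; rewrite /shiftk; f_equal; lia. Qed.

Lemma shiftk0 (x : config A) : shiftk 0 x = x.
Proof. apply: funext => i; rewrite /shiftk; f_equal; lia. Qed.

Lemma shift_shiftk (k : Z) (x : config A) : Defs.shift (shiftk k x) = shiftk (k + 1) x.
Proof. apply: funext => i; rewrite /shiftk /Defs.shift; f_equal; lia. Qed.

Lemma agree_on_mono (m1 m2 : Z) (x y : config A) :
  m1 <= m2 -> agree_on m2 x y -> agree_on m1 x y.
Proof. by move=> Hm Hxy i Hi; apply: Hxy; lia. Qed.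

Lemma agree_on_sym (m : Z) (x y : config A) : agree_on m x y -> agree_on m y x.
Proof. by move=> Hxy i Hi; rewrite Hxy. Qed.

Lemma agree_on_trans (m : Z) (x y z : config A) :
  agree_on m x y -> agree_on m y z -> agree_on m x z.
Proof. by move=> Hxy Hyz i Hi; rewrite Hxy ?Hyz. Qed.

End ShiftAlgebra.

Lemma infinite_pigeonhole (C : finType) (P : nat -> Prop) (colour : nat -> C) :
  (forall N, exists K, (N <= K)%nat /\ P K) ->
  exists c, forall N, exists K, (N <= K)%nat /\ P K /\ colour K = c.
Proof.
move=> Pinf; apply: contrapT => Hno.
have bound : forall c, exists N, forall K, (N <= K)%nat -> P K -> colour K <> c.
  move=> c; apply: contrapT => Hc; apply: Hno; exists c => N; apply: contrapT => HN.
  by apply: Hc; exists N => K HK PK Kc; apply: HN; exists K.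
have [Nc HNc] := choice bound.
have [K [HK PK]] := Pinf (\max_(c : C) Nc c)%nat.
apply: (HNc (colour K) K) => //.
exact: leq_trans (leq_bigmax _) HK.
Qed.

(* The cluster point is built radius by radius, keeping at each stage
   a pattern that the sequence matches infinitely often. *)
Section Compactness.
Variable T : finType.

Definition frequent (s : nat -> config T) (m : Z) (w : config T) : Prop :=
  forall N, exists K, (N <= K)%nat /\ agree_on m (s K) w.

Lemma frequent_extend (s : nat -> config T) (m : Z) (w : config T) :
  frequent s m w -> exists w', agree_on m w w' /\ frequent s (m + 1) w'.
Proof.
move=> Hw.
have [[l r] Hlr] := infinite_pigeonhole (fun K => (s K (- (m + 1)), s K (m + 1))) Hw.
exists (fun i => if i =? - (m + 1) then l else if i =? m + 1 then r else w i); split.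
  move=> i Hi; case: (Z.eqb_spec i (- (m + 1))); first lia.
  by case: (Z.eqb_spec i (m + 1)); first lia.
move=> N; have [K [HK [HKw [<- <-]]]] := Hlr N; exists K; split => // i Hi.
case: (Z.eqb_spec i (- (m + 1))) => [-> // | Hi1].
case: (Z.eqb_spec i (m + 1)) => [-> // | Hi2].
by apply: HKw; lia.
Qed.

Lemma cluster_point (s : nat -> config T) :
  exists c : config T, forall (m : Z) (N : nat),
    exists K, (N <= K)%nat /\ agree_on m (s K) c.
Proof.
have step : forall mw : Z * config T, exists w', frequent s mw.1 mw.2 ->
    agree_on mw.1 mw.2 w' /\ frequent s (mw.1 + 1) w'.
  move=> [m w]; have [Hw|Hw] := pselect (frequent s m w).
    by have [w' Hw'] := frequent_extend Hw; exists w'.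
  by exists w.
have [g Hg] := choice step.
pose W := fix W (k : nat) : config T :=
  if k is k'.+1 then g (Z.of_nat k' - 1, W k') else s O.
have HW : forall k, frequent s (Z.of_nat k - 1) (W k) /\
                    agree_on (Z.of_nat k - 1) (W k) (W k.+1).
  elim=> [|k [Hk _]].
    have H0 : frequent s (Z.of_nat 0 - 1) (W O).
      by move=> N; exists N; split => // i Hi; lia.
    by split => //; exact: (proj1 (Hg (_, W O) H0)).
  have Hk1 : frequent s (Z.of_nat k.+1 - 1) (W k.+1).
    have -> : Z.of_nat k.+1 - 1 = Z.of_nat k - 1 + 1 by lia.
    exact: (proj2 (Hg (_, W k) Hk)).
  by split => //; exact: (proj1 (Hg (_, W k.+1) Hk1)).
have coherent : forall k d, agree_on (Z.of_nat k - 1) (W k) (W (k + d)%nat).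
  move=> k; elim=> [|d IH]; first by rewrite addn0.
  apply: agree_on_trans IH _; rewrite addnS.
  by apply: agree_on_mono (proj2 (HW _)); lia.
exists (fun i => W (Z.to_nat (Z.abs i)).+1 i) => m N.
have [Hm|Hm] := Z_lt_le_dec m 0.
  by exists N; split => // i Hi; lia.
have [K [HK HKW]] := proj1 (HW (Z.to_nat m).+1) N.
exists K; split => // i Hi; rewrite HKW; last by lia.
have -> : (Z.to_nat m).+1 = ((Z.to_nat (Z.abs i)).+1 + (Z.to_nat m - Z.to_nat (Z.abs i)))%nat.
  by lia.
by symmetry; apply: coherent; lia.
Qed.

End Compactness.

Definition synchronizing (A : finType) (X : config A -> Prop) (w : config A) (a b : Z) : Prop :=
  forall u v, X u -> X v -> agree_in a b u w -> agree_in a b v w -> X (splice b u v).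

Lemma synchronizing_agree (A : finType) (X : config A -> Prop) (w w' : config A) (a b : Z) :
  agree_in a b w w' -> synchronizing X w a b -> synchronizing X w' a b.
Proof.
move=> Hww' Hsync u v Xu Xv Hu Hv.
by apply: Hsync => // i Hi; rewrite (Hu i, Hv i) // Hww'.
Qed.

Lemma synchronizing_shift (A : finType) (X : config A -> Prop) (w : config A) (a b c : Z) :
  (forall k x, X x -> X (shiftk k x)) ->
  synchronizing X w a b -> synchronizing X (shiftk c w) (a - c) (b - c).
Proof.
move=> Xshift Hsync u v Xu Xv Hu Hv.
have back : forall z, agree_in (a - c) (b - c) z (shiftk c w) ->
    agree_in a b (shiftk (- c) z) w.
  move=> z Hz i Hi; rewrite /shiftk Hz; last by lia.
  by rewrite /shiftk; f_equal; lia.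
have := Xshift c _ (Hsync _ _ (Xshift _ _ Xu) (Xshift _ _ Xv) (back _ Hu) (back _ Hv)).
congr X; apply: funext => i; rewrite /shiftk /splice.
case: (Z.leb_spec (i + c) b); case: (Z.leb_spec i (b - c)); try lia;
  by move=> _ _; f_equal; lia.
Qed.

(* A shift presented by a labelled graph: it is shift invariant and closed
   (the compactness argument applied to the paths presenting the
   approximants of a limit point), and has synchronizing windows. *)
Section SoficPresentation.
Variables (A V E : finType) (src tgt : E -> V) (lab : E -> A).
Variable X : config A -> Prop.

Definition is_path (p : Z -> E) : Prop := forall i, tgt (p i) = src (p (i + 1)).

Hypothesis presentation : forall x, X x <-> exists p, is_path p /\ forall i, lab (p i) = x i.

Lemma path_label_in (p : Z -> E) : is_path p -> X (fun i => lab (p i)).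
Proof. by move=> Hp; apply/presentation; exists p. Qed.

Lemma presented_shift_invariant (k : Z) (x : config A) : X x -> X (shiftk k x).
Proof.
move/presentation=> [p [Hp Hpx]]; apply/presentation.
exists (fun i => p (i + k)); split => i; last exact: Hpx.
by rewrite Hp; do 2!f_equal; lia.
Qed.

Lemma presented_closed : closed_set X.
Proof.
move=> x Hx.
have approx : forall k : nat, exists p, is_path p /\
    agree_on (Z.of_nat k) (fun i => lab (p i)) x.
  move=> k; have [z [/presentation [p [Hp Hpz]] Hxz]] := Hx (Z.of_nat k).
  by exists p; split => // i Hi; rewrite Hpz Hxz.
have [ps Hps] := choice approx.
have [P HP] := cluster_point ps.
apply/presentation; exists P; split.
  move=> i; have [K [_ HK]] := HP (Z.abs i + 1) O.
  have [Ei Ei1] : ps K i = P i /\ ps K (i + 1) = P (i + 1) by split; apply: HK; lia.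
  by rewrite -Ei -Ei1; apply: (proj1 (Hps K)).
move=> i; have [K [HKi HK]] := HP (Z.abs i) (Z.to_nat (Z.abs i)).
by rewrite -HK; [apply: (proj2 (Hps K)) |]; lia.
Qed.

Definition follower (w : config A) (a b : Z) : {set V} :=
  [set s | `[< exists p, is_path p /\ agree_in a b (fun i => lab (p i)) w /\
                          src (p (b + 1)) = s >]].

(* If u carries it, the follower set of any
   longer window [min a (-m), b] of u is contained in, hence equal to, that
   of w; so the path of v can be entered at b + 1 after a path labelled by
   u on that longer window, and closedness of X yields the glued point. *)
Lemma minimal_follower_synchronizing (w : config A) (a b : Z) :
  (forall z a' b', X z -> #|follower w a b| <= #|follower z a' b'|)%nat ->
  synchronizing X w a b.
Proof.
move=> Hmin u v Xu Xv Huw Hvw; apply: presented_closed => m.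
have sub : follower u (Z.min a (- m)) b \subset follower w a b.
  apply/subsetP => s; rewrite !inE => /asboolP [p [Hp [Hpu Hps]]].
  apply/asboolP; exists p; split => //; split => // i Hi.
  by rewrite Hpu ?Huw //; lia.
have same : follower u (Z.min a (- m)) b = follower w a b.
  by apply/eqP; rewrite eqEcard sub Hmin.
have [q [Hq Hqv]] := iffLR (presentation v) Xv.
have : src (q (b + 1)) \in follower u (Z.min a (- m)) b.
  rewrite same inE; apply/asboolP; exists q; split => //; split => // i Hi.
  by rewrite Hqv Hvw.
rewrite inE => /asboolP [p [Hp [Hpu Hpq]]].
pose r := fun i => if i <=? b then p i else q i.
exists (fun i => lab (r i)); split.
  apply: path_label_in => i; rewrite /r.
  case: (Z.leb_spec i b) => Hib; case: (Z.leb_spec (i + 1) b) => Hib1;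
    [exact: Hp | | lia | exact: Hq].
  by replace i with b by lia; rewrite Hp Hpq.
move=> i Hi; rewrite /r /splice; case: (Z.leb_spec i b) => Hib //.
by rewrite Hpu //; lia.
Qed.

End SoficPresentation.

(* Every nonempty sofic shift has a synchronizing window (a "magic word"):
   take one whose follower set has minimal size. *)
Lemma sofic_synchronizing (A : finType) (X : config A -> Prop) (x0 : config A) :
  sofic X -> X x0 -> exists w a b, X w /\ synchronizing X w a b.
Proof.
move=> [V [E [src [tgt [lab HX]]]]] Xx0.
pose size_ok := fun N => `[< exists w a b, X w /\ #|follower src tgt lab w a b| = N >].
have size_ex : exists N, size_ok N.
  by exists #|follower src tgt lab x0 0 0|; apply/asboolP; exists x0, 0, 0.
case: (ex_minnP size_ex) => N /asboolP [w [a [b [Xw HwN]]]] Nmin.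
exists w, a, b; split => //; apply: (minimal_follower_synchronizing HX) => z a' b' Xz.
by rewrite HwN; apply: Nmin; apply/asboolP; exists z, a', b'.
Qed.

Lemma sofic_shift_invariant (A : finType) (X : config A -> Prop) :
  sofic X -> forall k x, X x -> X (shiftk k x).
Proof. by move=> [V [E [src [tgt [lab HX]]]]]; apply: presented_shift_invariant HX. Qed.

Lemma sofic_closed (A : finType) (X : config A -> Prop) : sofic X -> closed_set X.
Proof. by move=> [V [E [src [tgt [lab HX]]]]]; apply: presented_closed HX. Qed.

Lemma left_transitive_deep (A : finType) (X : config A -> Prop) (x w : config A) :
  (forall k z, X z -> X (shiftk k z)) -> Defs.left_transitive X x -> X w ->
  forall J m, exists i, i <= J /\ agree_on m (shiftk i x) w.
Proof.
move=> Xshift Hx Xw J m.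
have [i [Hi Hag]] := Hx _ (Xshift (Z.abs J) _ Xw) (m + Z.abs J).
exists (i - Z.abs J); split; first by lia.
move=> l Hl; have := Hag (l - Z.abs J); rewrite /shiftk.
have -> : l - Z.abs J + Z.abs J = l by lia.
have -> : l + (i - Z.abs J) = l - Z.abs J + i by lia.
by apply; lia.
Qed.

Lemma left_transitive_synchronizing (A : finType) (X : config A -> Prop) (x : config A) :
  sofic X -> X x -> Defs.left_transitive X x ->
  forall J, exists a b, b <= J /\ synchronizing X x a b.
Proof.
move=> HX Xx Hx J; have Xshift := sofic_shift_invariant HX.
have [w [a [b [Xw Hw]]]] := sofic_synchronizing HX Xx.
have [i [Hi Hag]] := left_transitive_deep Xshift Hx Xw (J - b) (Z.abs a + Z.abs b).
exists (a + i), (b + i); split; first by lia.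
have Hwin : synchronizing X (shiftk i x) a b.
  by apply: synchronizing_agree Hw => l Hl; rewrite Hag //; lia.
have := synchronizing_shift (c := - i) Xshift Hwin.
by rewrite shiftk_shiftk Z.add_opp_diag_l shiftk0 !Z.sub_opp_r.
Qed.

Section SlidingBlockCode.
Variables (A B : finType) (X : config A -> Prop) (f : config A -> config B).
Hypothesis Xshift : forall k x, X x -> X (shiftk k x).
Hypothesis f_shift : forall x, X x -> f (Defs.shift x) = Defs.shift (f x).

Lemma factor_shiftk (k : Z) (x : config A) : X x -> f (shiftk k x) = shiftk k (f x).
Proof.
have forward : forall (m : nat) z, X z -> f (shiftk (Z.of_nat m) z) = shiftk (Z.of_nat m) (f z).
  elim=> [|m IH] z Xz; first by rewrite !shiftk0.
  rewrite Nat2Z.inj_succ -Z.add_1_r -!shift_shiftk f_shift ?IH //.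
  exact: Xshift.
move=> Xx; have [Hk|Hk] := Z_le_gt_dec 0 k.
  by rewrite -(Z2Nat.id k Hk) forward.
have Xkx := Xshift k Xx.
have Ex : x = shiftk (Z.of_nat (Z.to_nat (- k))) (shiftk k x).
  by rewrite shiftk_shiftk Z2Nat.id ?Z.add_opp_diag_l ?shiftk0 //; lia.
rewrite {2}Ex (forward _ _ Xkx) shiftk_shiftk.
have -> : k + Z.of_nat (Z.to_nat (- k)) = 0 by lia.
by rewrite shiftk0.
Qed.

Hypothesis X_closed : closed_set X.
Hypothesis f_cont : continuous_on X f.

(* Uniform continuity: by compactness a single radius R controls the
   zeroth coordinate of the image. *)
Lemma uniform_radius :
  exists R, 0 <= R /\ forall u v, X u -> X v -> agree_on R u v -> f u 0 = f v 0.
Proof.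
apply: contrapT => Hno.
have bad : forall m : nat, exists uv : config A * config A,
    X uv.1 /\ X uv.2 /\ agree_on (Z.of_nat m) uv.1 uv.2 /\ f uv.1 0 <> f uv.2 0.
  move=> m; apply: contrapT => Hm; apply: Hno; exists (Z.of_nat m); split; first by lia.
  move=> u v Xu Xv Huv; apply: contrapT => Hne; apply: Hm; by exists (u, v).
have [uv Huv] := choice bad.
have [c Hc] := cluster_point (fun m => (uv m).1).
have Xc : X c.
  apply: X_closed => m; have [K [_ HK]] := Hc m O.
  by exists (uv K).1; split; [apply: (proj1 (Huv K)) | apply: agree_on_sym].
have [r Hr] := f_cont Xc 0.
have [K [HKr HK]] := Hc r (Z.to_nat r).
have [Xu [Xv [Huv' Hne]]] := Huv K.
have Hu : agree_on 0 (f c) (f (uv K).1) by apply: Hr => //; apply: agree_on_sym.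
have Hv : agree_on 0 (f c) (f (uv K).2).
  apply: Hr => //; apply: agree_on_trans (agree_on_sym HK) _.
  by apply: agree_on_mono Huv'; lia.
by apply: Hne; rewrite -(Hu 0) ?(Hv 0) //; lia.
Qed.

Lemma block_radius :
  exists R, 0 <= R /\ forall u v i, X u -> X v ->
    agree_in (i - R) (i + R) u v -> f u i = f v i.
Proof.
have [R [HR HRf]] := uniform_radius; exists R; split => // u v i Xu Xv Huv.
have at0 : forall z, f z i = shiftk i (f z) 0 by move=> z; rewrite /shiftk.
rewrite (at0 u) (at0 v) -!factor_shiftk //.
apply: HRf; [exact: Xshift | exact: Xshift |].
by move=> l Hl; rewrite /shiftk Huv //; lia.
Qed.

End SlidingBlockCode.

Section FactorMap.
Variables (A B : finType) (X : config A -> Prop) (Y : config B -> Prop).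
Variables (f : config A -> config B) (n : nat) (R : Z).
Hypothesis Xshift : forall k x, X x -> X (shiftk k x).
Hypothesis f_shift : forall x, X x -> f (Defs.shift x) = Defs.shift (f x).
Hypothesis f_into : forall x, X x -> Y (f x).
Hypothesis f_onto : forall z, Y z -> exists x, X x /\ f x = z.
Hypothesis f_local : forall u v i, X u -> X v ->
  agree_in (i - R) (i + R) u v -> f u i = f v i.

Let f_shiftk := factor_shiftk Xshift f_shift.

Lemma image_left_transitive (x : config A) (c : Z) :
  X x -> Defs.left_transitive X x -> Defs.left_transitive Y (shiftk c (f x)).
Proof.
move=> Xx Hx z Yz m; have [u [Xu <-]] := f_onto Yz.
have [i [Hi Hiu]] := left_transitive_deep Xshift Hx Xu (- Z.abs c) (m + R).
exists (i - c); split; first by lia.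
move=> l Hl; rewrite /shiftk.
have -> : l + (i - c) + c = l + i by lia.
rewrite -[f x (l + i)]/(shiftk i (f x) l) -f_shiftk //.
apply: f_local => [||l' Hl']; [exact: Xshift | exact: Xu |].
by apply: Hiu; lia.
Qed.

Hypothesis f_rc : right_continuing_ae X Y f n.

(* Right-continuation with retract n, moved from coordinate 0 to
   coordinate c by conjugating with the shift. *)
Lemma right_continuing_at (v : config A) (z : config B) (c : Z) :
  X v -> Y (shiftk c z) -> Defs.left_transitive Y (shiftk c z) ->
  (forall i, i <= c + Z.of_nat n -> f v i = z i) ->
  exists Q, X Q /\ (forall i, i <= c -> Q i = v i) /\ f Q = z.
Proof.
move=> Xv Yz Hz Hvz.
have Hvz' : forall i, i <= Z.of_nat n -> f (shiftk c v) i = shiftk c z i.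
  by move=> i Hi; rewrite f_shiftk // /shiftk Hvz //; lia.
have [x' [Xx' [Hx'v Hx'z]]] := f_rc (Xshift c Xv) Yz Hz Hvz'.
exists (shiftk (- c) x'); split; first exact: Xshift.
split; last by rewrite f_shiftk // Hx'z shiftk_shiftk Z.add_opp_diag_l shiftk0.
move=> i Hi; rewrite /shiftk Hx'v; last by lia.
by rewrite /shiftk; f_equal; lia.
Qed.

Section Departure.
Variables (x y : config A) (k d a b : Z).
Hypotheses (Xx : X x) (Xy : X y) (x_lt : Defs.left_transitive X x).
Hypothesis xy_asym : forall i, i <= k -> x i = y i.
Hypothesis fxy : f x = f y.
Hypothesis xy_diff : x d <> y d.
Hypothesis b_le_k : b <= k.
Hypothesis x_sync : synchronizing X x a b.
Hypothesis R_ge0 : 0 <= R.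

Section Gluing.
Variables (j M : Z).
Hypothesis copy : agree_on M (shiftk j x) y.
Hypothesis M_large : Z.abs a + Z.abs b + Z.abs d + Z.of_nat n + 2 * R <= M.

Lemma copy_far (l : Z) : Z.abs (l - j) <= M -> x l = y (l - j).
Proof. by move=> Hl; rewrite -copy /shiftk; [f_equal | ]; lia. Qed.

(* Follow x up to the copy's synchronizing window, then continue as x
   shifted to the copy's position. *)
Let glued : config A := splice (b + j) x (shiftk (- j) x).

Lemma glued_in_X : X glued.
Proof.
have sync := synchronizing_shift (c := - j) Xshift x_sync.
rewrite !Z.sub_opp_r in sync; apply: sync => //; first exact: Xshift.
move=> l Hl; rewrite copy_far; last by lia.
by rewrite -xy_asym /shiftk; [f_equal | ]; lia.
Qed.

(* The glued point has the image of x as far as coordinate j + d + n: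
   left of the window it is x itself, right of it it is a shifted copy
   of x, whose image is that of the shifted copy of y sitting in x. *)
Lemma glued_image (i : Z) : i <= j + d + Z.of_nat n -> f glued i = f x i.
Proof.
move=> Hi; have [Hleft|Hright] := Z_le_gt_dec i (j + b - R).
  apply: f_local => [|//|l Hl]; first exact: glued_in_X.
  by rewrite /glued /splice; case: (Z.leb_spec l (b + j)) => //; lia.
have E1 : f glued i = f (shiftk (- j) x) i.
  apply: f_local => [||l Hl]; [exact: glued_in_X | exact: Xshift |].
  rewrite /glued /splice; case: (Z.leb_spec l (b + j)) => Hlb //.
  rewrite copy_far -?xy_asym /shiftk; try lia.
  by f_equal; lia.
have E2 : f (shiftk (- j) y) i = f x i.
  apply: f_local => [||l Hl]; [exact: Xshift | exact: Xx |].
  by rewrite copy_far /shiftk; [f_equal | ]; lia.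
by rewrite E1 -E2 !f_shiftk // fxy.
Qed.

End Gluing.

Lemma departing_preimage (t : Z) :
  exists Q, X Q /\ f Q = f x /\ left_asymptotic Q x /\ exists e, e <= t /\ Q e <> x e.
Proof.
pose M := Z.abs a + Z.abs b + Z.abs d + Z.of_nat n + 2 * R.
have [j [Hj copy]] := left_transitive_deep Xshift x_lt Xy (t - d) M.
have k_lt_d : k < d by case: (Z_lt_le_dec k d) => // Hdk; case: xy_diff; apply: xy_asym.
have Yz : Y (shiftk (j + d) (f x)) by rewrite -f_shiftk //; apply: f_into; apply: Xshift.
have [Q [XQ [HQ fQ]]] := right_continuing_at (glued_in_X copy (Z.le_refl M)) Yz
  (image_left_transitive (j + d) Xx x_lt) (glued_image copy (Z.le_refl M)).
exists Q; split => //; split => //; split.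
  exists (b + j) => i Hi; rewrite HQ; last by lia.
  by rewrite /splice; case: (Z.leb_spec i (b + j)) => //; lia.
exists (j + d); split; first by lia.
rewrite HQ; last by lia.
rewrite /splice; case: (Z.leb_spec (j + d) (b + j)) => Hjd; first by lia.
rewrite /shiftk (copy_far copy (Z.le_refl M) (l := j + d)); last by rewrite /M; lia.
have -> : j + d + - j = d by lia.
by have -> : j + d - j = d by lia.
Qed.

End Departure.
End FactorMap.

Lemma list_uniform_witness (T : Type) (P : T -> Z -> Prop) (l : list T) :
  (forall Q t t', t <= t' -> P Q t -> P Q t') ->
  (forall t, exists Q, In Q l /\ P Q t) -> exists Q, In Q l /\ forall t, P Q t.
Proof.
move=> Pmono; elim: l => [|h l IH] Hl; first by have [Q [[] _]] := Hl 0.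
have [Hh|Hh] := pselect (forall t, P h t); first by exists h; split; [left|].
have [t0 Ht0] := (existsNP _).2 Hh.
have [|Q [HQ HQt]] := IH; last by exists Q; split; [right|].
move=> t; have [Q [[<-|HQ] HP]] := Hl (Z.min t t0).
  by case: Ht0; apply: Pmono HP; lia.
by exists Q; split => //; apply: Pmono HP; lia.
Qed.

Theorem mainTheorem3 (A B : finType) (X : config A -> Prop) (Y : config B -> Prop)
  (f : config A -> config B) (n : nat) :
  sofic X -> sofic Y -> irreducible X -> irreducible Y ->
  factor_map X Y f -> finite_to_one X f ->
  right_continuing_ae X Y f n ->
  right_closing_ae X f.
Proof.
move=> HX _ _ _ [f_into [f_cont [f_shift f_onto]]] f_fin f_rc.
move=> x y Xx Xy x_lt _ [k xy_asym] fxy.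
apply: funext => d; apply: contrapT => xy_diff.
have Xshift := sofic_shift_invariant HX.
have [a [b [b_le_k x_sync]]] := left_transitive_synchronizing HX Xx x_lt k.
have [R [R_ge0 f_local]] := block_radius Xshift f_shift (sofic_closed HX) f_cont.
have departing := departing_preimage Xshift f_shift f_into f_onto f_local f_rc
  Xx Xy x_lt xy_asym fxy xy_diff b_le_k x_sync R_ge0.
(* Finitely many preimages of f x, so one of them departs from x
   arbitrarily far to the left while being left-asymptotic to it. *)
have [preimages Hpre] := f_fin (f x).
have [Q [_ HQ]] : exists Q, In Q preimages /\ forall t,
    left_asymptotic Q x /\ exists e, e <= t /\ Q e <> x e.
  apply: list_uniform_witness => [Q t t' Htt' [HQx [e [He HQe]]] | t].
    by split => //; exists e; split => //; lia.
  have [Q [XQ [fQ HQt]]] := departing t.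
  by exists Q; split => //; apply: Hpre.
have [[m HQm] _] := HQ 0.
have [_ [e [He HQe]]] := HQ m.
by apply: HQe; apply: HQm.
Qed.
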